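(* If $U$ is a negative finite multiset on $\mathbb{N}^2$, then $\mathrm{BRSK}(U)$ is a negative semistandard notched bitableau.
   Context: $\mathbb{N}$ is the set of positive integers; a finite multiset on $\mathbb{N}^2$ is negative if each of its elements $(a,b)$ satisfies $a<b$. Notched tableau: finite sequence of rows $P_1,\dots,P_r$, each a left-justified, possibly empty row of boxes with positive integer entries; row strict if each row strictly increases left to right (a row is then identified with its set of entries). Notched bitableau: pair $(P,Q)$ of notched tableaux of the same shape. Termwise order on finite multisets of $\mathbb{N}$ of equal size: $\{a_1\le\dots\le a_k\}\le\{b_1\le\dots\le b_k\}$ iff $a_i\le b_i$ for all $i$; $A\lessdot B$ iff $A,B$ nonempty and $a_i<b_i$ for all $i$. ''$A-C\le B-D$'' means $A\sqcup D\le B\sqcup C$ (multiset union). $(P,Q)$ is semistandard if both are row strict and $P_1-Q_1\le\cdots\le P_r-Q_r$; negative if $P_i\lessdot Q_i$ for all $i$. Bounded insertion: for $b\in\mathbb{N}$, a row-strict notched tableau $P$ is semistandard on $b$ if the tableau $P^{<b}$ obtained by deleting all entries $\ge b$ has weakly decreasing row lengths (top to bottom) and weakly increasing columns. For such $P$ and $a<b$, $P\xleftarrow{b}a$ is computed by: (1) remove the entries $\ge b$ to get $P^{<b}$; (2) insert $a$ into $P^{<b}$ by row insertion: into a row, if $a$ exceeds all its entries append $a$ in a new box at the right end and stop; otherwise replace the smallest entry $\ge a$ by $a$ and insert the replaced entry into the next row the same way (a row below the last row counts as empty); the box added at the end is the new box; (3) put the removed entries back at the right ends of the rows they came from. BRSK: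 list $U=\{(a_1,b_1),\dots,(a_t,b_t)\}$ so that $b_1\ge\dots\ge b_t$ and $a_i\ge a_{i+1}$ whenever $b_i=b_{i+1}$. Start with $(P^{(0)},Q^{(0)})=(\emptyset,\emptyset)$; set $P^{(i+1)}=P^{(i)}\xleftarrow{b_{i+1}}a_{i+1}$, and obtain $Q^{(i+1)}$ by inserting $b_{i+1}$ at the left end of row $j$ of $Q^{(i)}$ (shifting that row right), where $j$ is the row of the new box. Then $\mathrm{BRSK}(U)=(P^{(t)},Q^{(t)})$. *)

From mathcomp Require Import all_boot.
Set Implicit Arguments. Unset Strict Implicit. Unset Printing Implicit Defensive.

(* A finite multiset on N^2 is a list of pairs (order irrelevant);
   a notched tableau is a list of rows, each a list of naturals
   (left to right). *)
Definition tableau := seq (seq nat).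

Definition mset_le (A B : seq nat) : bool :=
  all2 leq (sort leq A) (sort leq B).
Definition mset_lessdot (A B : seq nat) : bool :=
  [&& A != [::], B != [::] & all2 ltn (sort leq A) (sort leq B)].
(* "A - C <= B - D" means A ⊔ D <= B ⊔ C *)
Definition mset_diff_le (A C B D : seq nat) : bool :=
  mset_le (A ++ D) (B ++ C).

Definition notched_tableau (P : tableau) : bool :=
  all (all (fun x => 0 < x)) P.
Definition row_strict (P : tableau) : bool := all (sorted ltn) P.
Definition same_shape (P Q : tableau) : bool := map size P == map size Q.
Definition notched_bitableau (P Q : tableau) : bool :=
  [&& notched_tableau P, notched_tableau Q & same_shape P Q].

Definition semistandard (P Q : tableau) : Prop :=
  [/\ row_strict P, row_strict Q &
      forall i, i.+1 < size P ->
        mset_diff_le (nth [::] P i) (nth [::] Q i)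
                     (nth [::] P i.+1) (nth [::] Q i.+1)].
Definition negative_bitableau (P Q : tableau) : Prop :=
  forall i, i < size P -> mset_lessdot (nth [::] P i) (nth [::] Q i).

Definition row_insert (r : seq nat) (x : nat) : seq nat * option nat :=
  if has (fun z => x <= z) r then
    let y := head 0 (sort leq (filter (fun z => x <= z) r)) in
    (set_nth 0 r (index y r) x, Some y)
  else (rcons r x, None).

(* Row insertion into a tableau; returns the new tableau and the row index
   (0-based) of the new box.  A row below the last row counts as empty. *)
Fixpoint tab_insert (T : tableau) (x : nat) : tableau * nat :=
  match T with
  | [::] => ([:: [:: x]], 0)
  | r :: T' =>
      let (r', bumped) := row_insert r x in
      match bumped with
      | None => (r' :: T', 0)
      | Some y => let (T'', j) := tab_insert T' y in (r' :: T'', j.+1)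
      end
  end.

Definition bounded_insert (b : nat) (P : tableau) (a : nat) : tableau * nat :=
  let low := map (filter (fun z => z < b)) P in
  let high := map (filter (fun z => b <= z)) P in
  let (L, j) := tab_insert low a in
  ([seq nth [::] L i ++ nth [::] high i | i <- iota 0 (size L)], j).

(* listing order: b_1 >= b_2 >= ..., and a_i >= a_{i+1} when b_i = b_{i+1} *)
Definition brsk_order (p q : nat * nat) : bool :=
  (q.2 < p.2) || ((q.2 == p.2) && (q.1 <= p.1)).

Definition brsk_step (PQ : tableau * tableau) (ab : nat * nat)
  : tableau * tableau :=
  let (P, Q) := PQ in
  let (P', j) := bounded_insert ab.2 P ab.1 in
  (P', set_nth [::] Q j (ab.2 :: nth [::] Q j)).

Definition BRSK (U : seq (nat * nat)) : tableau * tableau :=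
  foldl brsk_step ([::], [::]) (sort brsk_order U).

(* U is a finite multiset on N^2 (N = positive integers) *)
Definition mset_on_N2 (U : seq (nat * nat)) : bool :=
  all (fun p => (0 < p.1) && (0 < p.2)) U.
Definition negative_mset (U : seq (nat * nat)) : bool :=
  all (fun p => p.1 < p.2) U.

From mathcomp Require Import all_boot zify.
Set Implicit Arguments. Unset Strict Implicit. Unset Printing Implicit Defensive.

(* Bounded insertion of [a] into [P] leaves the entries [>= b] in place and
   row-inserts [a] into [P^{<b}], which stays semistandard.  Everything is
   phrased through the counts [#{z in row | z < t}]: on multisets of equal size
   the termwise order is domination of these counts, so semistandardness and
   negativity of [(P, Q)] become linear inequalities between counts.  A step
   preserves them: for thresholds [t <= b] only [P^{<b}] matters, while for
   [t > b] rows [j] of [P] and of [Q] both gain exactly one counted entry.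
   Rows of [Q] stay strict because pairs with equal [b] arrive with weakly
   decreasing [a], so by the row bumping lemma their boxes move strictly down. *)

Definition count_lt (t : nat) (s : seq nat) : nat := count (fun z => z < t) s.
Arguments count_lt : simpl never.

Lemma count_lt_nil t : count_lt t [::] = 0.
Proof. by []. Qed.

Lemma count_lt_cons t x s : count_lt t (x :: s) = (x < t) + count_lt t s.
Proof. by []. Qed.

Lemma count_lt_cat t s1 s2 :
  count_lt t (s1 ++ s2) = count_lt t s1 + count_lt t s2.
Proof. exact: count_cat. Qed.

Lemma count_lt_rcons t s x : count_lt t (rcons s x) = count_lt t s + (x < t).
Proof. by rewrite -cats1 count_lt_cat count_lt_cons count_lt_nil addn0. Qed.

Lemma count_lt_sort t s : count_lt t (sort leq s) = count_lt t s.
Proof. exact: count_sort. Qed.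

Lemma count_lt_filter_lt t b s :
  count_lt t (filter (fun z => z < b) s) = count_lt (minn t b) s.
Proof.
by rewrite /count_lt count_filter; apply: eq_count => z /=; rewrite leq_min.
Qed.

Lemma count_lt_filter_split t b s :
  count_lt t (filter (fun z => z < b) s) + count_lt t (filter (fun z => b <= z) s)
  = count_lt t s.
Proof.
elim: s => [|x s IH] //=; rewrite !count_lt_cons -IH.
by case: ltnP => _; rewrite /= ?count_lt_cons; lia.
Qed.

Lemma size_filter_split b s :
  size (filter (fun z => z < b) s) + size (filter (fun z => b <= z) s) = size s.
Proof.
rewrite !size_filter -(count_predC (fun z => z < b)); congr (_ + _).
by apply: eq_count => z /=; rewrite leqNgt.
Qed.

Lemma count_lt_all t s : all (fun z => z < t) s -> count_lt t s = size s.
Proof. by move=> h; apply/eqP; rewrite -all_count. Qed.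

Lemma count_lt_eq0 t s : all (fun z => t <= z) s -> count_lt t s = 0.
Proof.
move/allP=> h; apply/eqP; rewrite -leqn0 leqNgt -has_count.
by apply/hasPn=> z /h; rewrite -leqNgt.
Qed.

Lemma count_lt_mono t s r : t <= s -> count_lt t r <= count_lt s r.
Proof. by move=> ts; apply: sub_count => z /= zt; apply: leq_trans zt ts. Qed.

Lemma count_lt_mem y s r : y \in r -> y < s -> count_lt y r < count_lt s r.
Proof.
case/splitPr=> r1 r2 ys; rewrite !count_lt_cat !count_lt_cons ltnn ys.
have := count_lt_mono r1 (ltnW ys); have := count_lt_mono r2 (ltnW ys); lia.
Qed.

Lemma nth_sorted_lt s k t : sorted leq s -> k < size s ->
  (nth 0 s k < t) = (k < count_lt t s).
Proof.
elim: s k => [|x s IH] k //= sorted_xs.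
have x_le_s : all (leq x) s := order_path_min leq_trans sorted_xs.
have none_lt : t <= x -> count_lt t s = 0.
  by move=> tx; apply: count_lt_eq0; apply: sub_all x_le_s => z; apply: leq_trans.
rewrite count_lt_cons; case: k => [|k] /= ks.
  by case: (ltnP x t) => // /none_lt ->.
rewrite IH ?(path_sorted sorted_xs) //.
by case: (ltnP x t) => [_|/none_lt ->]; rewrite ?add1n ?ltnS.
Qed.

Lemma all2_nth (T1 T2 : Type) (x1 : T1) (x2 : T2) (r : T1 -> T2 -> bool) s1 s2 :
  size s1 = size s2 ->
  (forall k, k < size s1 -> r (nth x1 s1 k) (nth x2 s2 k)) -> all2 r s1 s2.
Proof.
elim: s1 s2 => [|y1 s1 IH] [|y2 s2] //= [size12] h.
by rewrite (h 0) //= IH // => k; apply: (h k.+1).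
Qed.

Lemma nth_sort_addn_le A B d : size A = size B ->
  (forall t, count_lt (t + d) B <= count_lt t A) ->
  forall k, k < size A -> nth 0 (sort leq A) k + d <= nth 0 (sort leq B) k.
Proof.
move=> sizeAB h k kA.
have sorted_sort X : sorted leq (sort leq X) by apply: sort_sorted; apply: leq_total.
set t := nth 0 (sort leq A) k.
have countA : count_lt t A <= k.
  have := nth_sorted_lt t (sorted_sort A) (k := k); rewrite size_sort count_lt_sort.
  by move=> /(_ kA); rewrite ltnn => /esym /negbT; rewrite -leqNgt.
have := nth_sorted_lt (t + d) (sorted_sort B) (k := k).
rewrite size_sort -sizeAB count_lt_sort.
move=> /(_ kA); case: ltnP => // _ /esym; have := h t; lia.
Qed.

Lemma mset_le_count A B : size A = size B ->
  (forall t, count_lt t B <= count_lt t A) -> mset_le A B.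
Proof.
move=> sizeAB h; apply: all2_nth; rewrite ?size_sort // => k kA.
have := nth_sort_addn_le (d := 0) sizeAB _ kA; rewrite addn0.
by apply=> t; rewrite addn0.
Qed.

Lemma mset_lessdot_count A B : size A = size B -> A != [::] ->
  (forall t, count_lt t.+1 B <= count_lt t A) -> mset_lessdot A B.
Proof.
move=> sizeAB A0 h; rewrite /mset_lessdot A0 -size_eq0 -sizeAB size_eq0 A0 /=.
apply: all2_nth; rewrite ?size_sort // => k kA.
have := nth_sort_addn_le (d := 1) sizeAB _ kA; rewrite addn1.
by apply=> t; rewrite addn1.
Qed.

Variant row_insert_spec (r : seq nat) (x : nat) : seq nat * option nat -> Prop :=
  | RowInsertAppend of (forall z, z \in r -> z < x) :
      row_insert_spec r x (rcons r x, None)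
  | RowInsertBump r1 y r2 of r = r1 ++ y :: r2 & x <= y
      & (forall z, z \in r -> x <= z -> y <= z) :
      row_insert_spec r x (r1 ++ x :: r2, Some y).

Lemma row_insertP r x : row_insert_spec r x (row_insert r x).
Proof.
rewrite /row_insert; case: ifPn => [has_ge | /hasPn none_ge]; last first.
  by constructor=> z /none_ge; rewrite -ltnNge.
set F := filter _ r.
have : 0 < size (sort leq F) by rewrite size_sort size_filter -has_count.
case sortF: (sort leq F) => [|y F'] //= _.
have sorted_yF' : sorted leq (y :: F') by rewrite -sortF; apply/sort_sorted/leq_total.
have y_le_F' : all (leq y) F' := order_path_min leq_trans sorted_yF'.
have : y \in F by rewrite -(mem_sort leq) sortF mem_head.
rewrite mem_filter => /andP [xy yr].
have r_split : r = take (index y r) r ++ y :: drop (index y r).+1 r.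
  by rewrite -{2}[y](nth_index 0 yr) -drop_nth ?index_mem // cat_take_drop.
rewrite set_nthE index_mem yr; apply: RowInsertBump r_split xy _ => z zr xz.
have : z \in sort leq F by rewrite mem_sort mem_filter xz zr.
by rewrite sortF inE => /predU1P [-> //|]; apply: (allP y_le_F').
Qed.

Lemma size_tab_insert T x L j : tab_insert T x = (L, j) ->
  [/\ j <= size T, size L = maxn j.+1 (size T) &
      forall i, size (nth [::] L i) = size (nth [::] T i) + (i == j)].
Proof.
elim: T x L j => [|r T IH] x L j /=; first by case=> <- <-; split=> // [[|[|i]]].
case: row_insertP => [_ | r1 y r2 -> _ _].
  case=> <- <-; split=> //= [|[|i]]; rewrite ?size_rcons ?addn0 ?addn1 //; lia.
case insT: (tab_insert T y) => [L' j'] [<- <-].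
have [j'T sizeL' sizeL'i] := IH _ _ _ insT.
split=> //=; first by rewrite sizeL' maxnSS.
by case=> [|i] /=; rewrite ?size_cat ?sizeL'i //= addn0.
Qed.

Lemma all_tab_insert (p : pred nat) T x L j : tab_insert T x = (L, j) ->
  p x -> all (all p) T -> all (all p) L.
Proof.
elim: T x L j => [|r T IH] x L j /=; first by case=> <- _ /= ->.
case: row_insertP => [_ | r1 y r2 -> _ _].
  by case=> <- _ px /andP [pr pT]; rewrite /= all_rcons px pr.
case insT: (tab_insert T y) => [L' j'] [<- _] px.
rewrite !all_cat /= => /andP [/andP [pr1 /andP [py pr2]] pT].
by rewrite /= (IH _ _ _ insT) // andbT all_cat pr1 /= px.
Qed.

Lemma tab_insert_row0 T x L j : tab_insert T x = (L, j) ->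
  nth [::] L 0 = (row_insert (nth [::] T 0) x).1.
Proof.
case: T => [|r T] /=; first by case=> <-.
by case: (row_insert r x) => r' [y|]; [case: (tab_insert T y) => L' j'|]; case=> <-.
Qed.

Lemma tab_insert_bumping T x' x T1 j1 T2 j2 : tab_insert T x' = (T1, j1) ->
  tab_insert T1 x = (T2, j2) -> x <= x' -> j1 < j2.
Proof.
elim: T x' x T1 j1 T2 j2 => [|r T IH] x' x T1 j1 T2 j2 /=.
  by case=> <- <- /=; rewrite /row_insert /= => + xx'; rewrite xx' /=; case=> _ <-.
case: row_insertP => [r_lt_x' | r1 y' r2 -> x'y' _] /=.
  case=> <- <- /=; case: row_insertP => [/(_ x') | r1 y r2 _ _ _].
    by rewrite mem_rcons mem_head => /(_ isT); lia.
  by case: tab_insert => ? ? [_ <-].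
case insT: (tab_insert T y') => [T1' j1'] [<- <-] /=.
case: row_insertP => [/(_ x') | r1' y r2' _ _ y_min].
  by rewrite mem_cat mem_head orbT => /(_ isT); lia.
case insT1: (tab_insert T1' y) => [T2' j2'] [_ <-] xx'.
have yx' : y <= x' by apply: y_min; rewrite ?mem_cat ?mem_head ?orbT.
by rewrite ltnS (IH _ _ _ _ _ _ insT insT1) //; apply: leq_trans x'y'.
Qed.

(* For strictly increasing rows the count condition says that row lengths weakly
   decrease and columns weakly increase, i.e. that [T] is semistandard in the
   sense required of [P^{<b}]. *)
Definition is_tableau (T : tableau) : Prop :=
  (forall i, pairwise ltn (nth [::] T i)) /\
  (forall i t, count_lt t (nth [::] T i.+1) <= count_lt t (nth [::] T i)).

Lemma pairwise_ltn_replace r1 r2 y x : pairwise ltn (r1 ++ y :: r2) ->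
  (forall z, z \in r1 -> z < x) -> x <= y -> pairwise ltn (r1 ++ x :: r2).
Proof.
rewrite !pairwise_cat /= => /and4P [/allrelP r1_lt -> y_lt_r2 ->] r1_lt_x xy.
rewrite andbT; apply/and3P; split=> //.
  apply/allrelP => u v ur1; rewrite inE => /predU1P [-> | vr2]; first exact: r1_lt_x.
  by apply: r1_lt; rewrite // inE vr2 orbT.
by apply: sub_all y_lt_r2 => z; apply: leq_ltn_trans.
Qed.

Lemma pairwise_ltn_rcons r x :
  pairwise ltn r -> (forall z, z \in r -> z < x) -> pairwise ltn (rcons r x).
Proof.
move=> strict_r r_lt_x; rewrite -cats1 pairwise_cat strict_r /= andbT.
by apply/allrelP => u v ur; rewrite inE => /eqP ->; apply: r_lt_x.
Qed.

Lemma count_lt_row_insert r y s :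
  count_lt s (row_insert r y).1 <=
  maxn (count_lt s r) (if y < s then (count_lt y r).+1 else 0).
Proof.
case: row_insertP => [r_lt_y | r1 y' r2 -> yy' y'_min] /=.
  rewrite count_lt_rcons; case: (ltnP y s) => ys; last lia.
  have -> : count_lt s r = count_lt y r.
    by apply: eq_in_count => z /r_lt_y /= zy; rewrite zy (ltn_trans zy ys).
  lia.
case: (ltnP y' s) => y's.
  rewrite !count_lt_cat !count_lt_cons (leq_ltn_trans yy' y's); lia.
case: (ltnP y s) => ys; last first.
  rewrite !count_lt_cat !count_lt_cons; lia.
have gap : count_lt s (r1 ++ y' :: r2) = count_lt y (r1 ++ y' :: r2).
  apply: eq_in_count => z zr /=; case: (ltnP z y) => zy; first exact: ltn_trans zy ys.
  by apply/negbTE; rewrite -leqNgt (leq_trans y's) ?y'_min.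
move: gap; rewrite !count_lt_cat !count_lt_cons (leq_gtF y's) (leq_gtF yy') ys; lia.
Qed.

Lemma count_lt_row_insert_bumped r1 r2 x y r s :
  (forall t, count_lt t r <= count_lt t (r1 ++ y :: r2)) -> x <= y ->
  count_lt s (row_insert r y).1 <= count_lt s (r1 ++ x :: r2).
Proof.
move=> dom xy; have := count_lt_row_insert r y s; have := dom s.
rewrite !count_lt_cat !count_lt_cons.
case: (ltnP y s) => ys; first last.
  by case: (x < s); lia.
have := count_lt_mem (r := r1 ++ y :: r2) _ ys.
rewrite mem_cat mem_head orbT => /(_ isT); have := dom y.
rewrite !count_lt_cat !count_lt_cons ltnn (leq_ltn_trans xy ys); lia.
Qed.

Lemma tab_insert_is_tableau T x L j :
  tab_insert T x = (L, j) -> is_tableau T -> is_tableau L.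
Proof.
elim: T x L j => [|r T IH] x L j /=.
  case=> <- _ _; split; first by case=> [|[|i]].
  by case=> [|i] t; rewrite /= ?count_lt_cons ?count_lt_nil; lia.
move=> + [strict dom].
have tabT : is_tableau T by split=> [i|i t]; [exact: strict i.+1 | exact: dom i.+1 t].
case: row_insertP => [r_lt_x | r1 y r2 r_eq xy y_min].
  case=> <- _; split=> [[|i]|[|i] t]; last exact: dom i.+1 t; last first.
  - by rewrite /= count_lt_rcons; have := dom 0 t; rewrite /=; lia.
  - exact: strict i.+1.
  - exact: pairwise_ltn_rcons (strict 0) r_lt_x.
case insT: (tab_insert T y) => [L' j'] [<- _].
have [strictL' domL'] := IH _ _ _ insT tabT.
have r1_lt_x z : z \in r1 -> z < x.
  move=> zr1; have zr : z \in r by rewrite r_eq mem_cat zr1.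
  have := strict 0; rewrite /= r_eq pairwise_cat => /and3P [/allrelP r1_lt_y _ _].
  have zy := r1_lt_y z y zr1 (mem_head _ _).
  by case: (ltnP z x) => // xz; have := y_min z zr xz; lia.
split=> [[|i]|[|i] t]; last exact: domL' i t; last first.
- rewrite /= (tab_insert_row0 insT); apply: count_lt_row_insert_bumped xy => t'.
  by rewrite -r_eq; apply: (dom 0 t').
- exact: strictL' i.
- by apply: pairwise_ltn_replace r1_lt_x xy; rewrite -r_eq; apply: (strict 0).
Qed.

Lemma all_nth_row (p : pred nat) (T : tableau) i :
  all (all p) T -> all p (nth [::] T i).
Proof. by elim: T i => [|r T IH] [|i] //= /andP [] // _ /IH. Qed.

Lemma nth_map_filter (p : pred nat) (T : tableau) i :
  nth [::] (map (filter p) T) i = filter p (nth [::] T i).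
Proof. by elim: T i => [|r T IH] [|i] //=. Qed.

(* [(a, b)] is the last pair inserted.  The last field says that its box, created
   by inserting [a] into [P^{<b}], lies weakly below every row of [Q] containing
   [b]; a next pair [(a', b)] has [a' <= a], so by the row bumping lemma its box
   lands strictly lower, which keeps the rows of [Q] strictly increasing.  The
   premise only excludes the empty initial state. *)
Record brsk_inv (P Q : tableau) (a b : nat) : Prop := BrskInv {
  size_Q : size Q = size P;
  size_Q_row : forall i, size (nth [::] Q i) = size (nth [::] P i);
  P_row_nonempty : forall i, i < size P -> 0 < size (nth [::] P i);
  P_row_strict : forall i, pairwise ltn (nth [::] P i);
  Q_row_strict : forall i, pairwise ltn (nth [::] Q i);
  P_row_pos : forall i, all (fun z => 0 < z) (nth [::] P i);
  last_b_pos : 0 < b;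
  Q_row_ge : forall i, all (fun z => b <= z) (nth [::] Q i);
  count_semistandard : forall i t,
    count_lt t (nth [::] P i.+1) + count_lt t (nth [::] Q i) <=
    count_lt t (nth [::] P i) + count_lt t (nth [::] Q i.+1);
  count_negative : forall i t,
    count_lt t.+1 (nth [::] Q i) <= count_lt t (nth [::] P i);
  last_box_lowest : (exists i, b \in nth [::] Q i) ->
    exists T jb, tab_insert T a = (map (filter (fun z => z < b)) P, jb) /\
                 forall i, b \in nth [::] Q i -> i <= jb
}.

Lemma brsk_inv_nil a b : 0 < b -> brsk_inv [::] [::] a b.
Proof.
by move=> b_pos; split=> // [[|i] | [|i] | [|i] | [|i] | [|i] t | [|i] t | [[|i]]].
Qed.

Section BrskStep.

Variables (P Q : tableau) (a0 b0 a b : nat).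
Hypothesis inv : brsk_inv P Q a0 b0.
Hypothesis ordered : brsk_order (a0, b0) (a, b).
Hypotheses (a_pos : 0 < a) (a_lt_b : a < b).

Let low := map (filter (fun z => z < b)) P.
Let L := (tab_insert low a).1.
Let j := (tab_insert low a).2.
Let P' := [seq nth [::] L i ++ filter (fun z => b <= z) (nth [::] P i)
          | i <- iota 0 (size L)].
Let Q' := set_nth [::] Q j (b :: nth [::] Q j).

Let insert_low : tab_insert low a = (L, j).
Proof. by rewrite /L /j; case: tab_insert. Qed.

Lemma brsk_step_eq : brsk_step (P, Q) (a, b) = (P', Q').
Proof.
rewrite /brsk_step /bounded_insert /= -/low insert_low; congr (_, _).
by apply: eq_map => i; rewrite nth_map_filter.
Qed.

Let b_le_b0 : b <= b0.
Proof. by case/orP: ordered => /= [/ltnW | /andP [/eqP -> _]]. Qed.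

Let a_le_a0 : b = b0 -> a <= a0.
Proof.
by move=> bb0; case/orP: ordered => /=; rewrite bb0 ?ltnn // eqxx.
Qed.

Let count_Q_small i t : t <= b0 -> count_lt t (nth [::] Q i) = 0.
Proof.
move=> tb0; apply: count_lt_eq0.
by apply: sub_all (Q_row_ge inv i) => z; apply: leq_trans.
Qed.

Let low_is_tableau : is_tableau low.
Proof.
split=> [i | i t]; rewrite !nth_map_filter.
  exact/pairwise_filter/(P_row_strict inv).
rewrite !count_lt_filter_lt; have := count_semistandard inv i (minn t b).
by rewrite !count_Q_small ?geq_min ?b_le_b0 ?orbT // !addn0.
Qed.

Let L_is_tableau : is_tableau L := tab_insert_is_tableau insert_low low_is_tableau.

Let L_row_lt_b i : all (fun z => z < b) (nth [::] L i).
Proof.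
apply: all_nth_row; apply: (all_tab_insert insert_low) => //.
by apply/allP => r /mapP [r0 _ ->]; apply: filter_all.
Qed.

Let L_row_pos i : all (fun z => 0 < z) (nth [::] L i).
Proof.
apply: all_nth_row; apply: (all_tab_insert insert_low a_pos).
apply/allP => r /mapP [r0 r0P ->]; have := P_row_pos inv (index r0 P).
rewrite nth_index // => /allP pos.
by apply/allP => z; rewrite mem_filter => /andP [_ /pos].
Qed.

Let size_L : size L = maxn j.+1 (size P).
Proof. by have [_ -> _] := size_tab_insert insert_low; rewrite size_map. Qed.

Let size_L_row i : size (nth [::] L i) = size (nth [::] low i) + (i == j).
Proof. by have [_ _ ->] := size_tab_insert insert_low. Qed.

Let P'_row i :
  nth [::] P' i = nth [::] L i ++ filter (fun z => b <= z) (nth [::] P i).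
Proof.
case: (ltnP i (size L)) => iL; first by rewrite (nth_map 0) ?size_iota // nth_iota.
have Pi : size P <= i by move: iL; rewrite size_L geq_max => /andP [].
by rewrite nth_default ?size_map ?size_iota // (nth_default _ iL) (nth_default _ Pi).
Qed.

Let Q'_row i : nth [::] Q' i = if i == j then b :: nth [::] Q i else nth [::] Q i.
Proof. by rewrite nth_set_nth /=; case: eqP => [->|]. Qed.

Let count_P'_small i t :
  t <= b -> count_lt t (nth [::] P' i) = count_lt t (nth [::] L i).
Proof.
move=> tb; rewrite P'_row count_lt_cat.
rewrite [count_lt t (filter _ _)]count_lt_eq0 ?addn0 //.
by apply: sub_all (filter_all _ _) => z; apply: leq_trans.
Qed.

Let count_P'_large i t :
  b <= t -> count_lt t (nth [::] P' i) = count_lt t (nth [::] P i) + (i == j).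
Proof.
move=> bt; have lt_t z : z < b -> z < t by move=> zb; apply: leq_trans zb bt.
rewrite P'_row count_lt_cat count_lt_all ?size_L_row ?nth_map_filter; last first.
  exact: sub_all (L_row_lt_b i).
have low_lt_t : all (fun z => z < t) (filter (fun z => z < b) (nth [::] P i)).
  exact: sub_all (filter_all _ _).
have := count_lt_filter_split t b (nth [::] P i).
by rewrite (count_lt_all low_lt_t); lia.
Qed.

Let count_Q'_small i t : t <= b -> count_lt t (nth [::] Q' i) = 0.
Proof.
move=> tb; have tb0 := leq_trans tb b_le_b0.
by rewrite Q'_row; case: (i == j); rewrite ?count_lt_cons ?(leq_gtF tb) count_Q_small.
Qed.

Let count_Q'_large i t :
  b < t -> count_lt t (nth [::] Q' i) = count_lt t (nth [::] Q i) + (i == j).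
Proof.
move=> bt; rewrite Q'_row.
by case: (i == j); rewrite ?count_lt_cons ?bt ?addn0 // addnC.
Qed.

Let b_in_Q_above i : b \in nth [::] Q i -> i < j.
Proof.
move=> bQi.
have bb0 : b = b0 by apply/eqP; rewrite eqn_leq b_le_b0 (allP (Q_row_ge inv i)).
have [|T [jb [insT below]]] := last_box_lowest inv; first by exists i; rewrite -bb0.
rewrite -bb0 in insT below.
have := tab_insert_bumping insT insert_low (a_le_a0 bb0).
by apply: leq_ltn_trans; apply: below.
Qed.

Let low_P' : map (filter (fun z => z < b)) P' = L.
Proof.
apply: (@eq_from_nth _ [::]) => [|i _]; first by rewrite !size_map size_iota.
rewrite nth_map_filter P'_row filter_cat (all_filterP (L_row_lt_b i)) -filter_predI.
rewrite (@eq_filter _ _ pred0) ?filter_pred0 ?cats0 // => z /=.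
by rewrite ltnNge andNb.
Qed.

Let size_P' : size P' = maxn j.+1 (size P).
Proof. by rewrite size_map size_iota size_L. Qed.

Let size_P'_row i : size (nth [::] P' i) = size (nth [::] P i) + (i == j).
Proof.
rewrite P'_row size_cat size_L_row nth_map_filter.
by have := size_filter_split b (nth [::] P i); lia.
Qed.

Let P'_row_nonempty i : i < size P' -> 0 < size (nth [::] P' i).
Proof.
rewrite size_P' size_P'_row leq_max => /orP [ij | iP]; last first.
  by have := P_row_nonempty inv iP; lia.
case: (ltnP i (size P)) => [iP | Pi]; first by have := P_row_nonempty inv iP; lia.
have [jP _ _] := size_tab_insert insert_low; rewrite size_map in jP.
have -> : i = j by lia.
by rewrite eqxx addn1.
Qed.

Let P'_row_strict i : pairwise ltn (nth [::] P' i).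
Proof.
rewrite P'_row pairwise_cat (proj1 L_is_tableau i).
rewrite pairwise_filter ?(P_row_strict inv) // !andbT.
apply/allrelP => u v /(allP (L_row_lt_b i)) ub; rewrite mem_filter => /andP [bv _].
exact: leq_trans ub bv.
Qed.

Let Q'_row_strict i : pairwise ltn (nth [::] Q' i).
Proof.
rewrite Q'_row; case: eqP => [-> | _]; last exact: (Q_row_strict inv i).
rewrite /= (Q_row_strict inv j) andbT; apply/allP => z zQ.
have bz : b <= z := leq_trans b_le_b0 (allP (Q_row_ge inv j) z zQ).
rewrite /= ltn_neqAle bz andbT; apply/eqP => bz_eq.
by move: zQ; rewrite -bz_eq => /b_in_Q_above; rewrite ltnn.
Qed.

Let count_semistandard_step i t :
  count_lt t (nth [::] P' i.+1) + count_lt t (nth [::] Q' i) <=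
  count_lt t (nth [::] P' i) + count_lt t (nth [::] Q' i.+1).
Proof.
case: (leqP t b) => tb.
  rewrite !count_Q'_small // !addn0 !count_P'_small //.
  exact: (proj2 L_is_tableau).
rewrite !count_P'_large ?count_Q'_large ?(ltnW tb) //.
by have := count_semistandard inv i t; lia.
Qed.

Let count_negative_step i t :
  count_lt t.+1 (nth [::] Q' i) <= count_lt t (nth [::] P' i).
Proof.
case: (leqP t.+1 b) => tb; first by rewrite count_Q'_small.
rewrite count_Q'_large // count_P'_large //.
by have := count_negative inv i t; lia.
Qed.

Lemma brsk_inv_step :
  brsk_inv (brsk_step (P, Q) (a, b)).1 (brsk_step (P, Q) (a, b)).2 a b.
Proof.
have b_pos : 0 < b := ltn_trans a_pos a_lt_b.
rewrite brsk_step_eq; split.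
- by rewrite size_set_nth size_P' (size_Q inv).
- move=> i; rewrite Q'_row size_P'_row -(size_Q_row inv).
  by case: (i == j); rewrite /= ?addn0 ?addn1.
- exact: P'_row_nonempty.
- exact: P'_row_strict.
- exact: Q'_row_strict.
- move=> i; rewrite P'_row all_cat L_row_pos /=.
  by apply: sub_all (filter_all _ _) => z; apply: leq_trans b_pos.
- exact: b_pos.
- move=> i; have Qi_ge := sub_all (fun z => leq_trans b_le_b0) (Q_row_ge inv i).
  by rewrite Q'_row; case: (i == j); rewrite //= leqnn.
- exact: count_semistandard_step.
- exact: count_negative_step.
- move=> _; exists low, j; split; first by rewrite low_P'.
  by move=> i; rewrite Q'_row; case: eqP => [-> // | _ /b_in_Q_above /ltnW].
Qed.

End BrskStep.

Lemma brsk_inv_bitableau P Q a b : brsk_inv P Q a b ->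
  notched_bitableau P Q /\ semistandard P Q /\ negative_bitableau P Q.
Proof.
case=> sizeQ sizeQi Pne Pstrict Qstrict Ppos b_pos Qge semistd neg _.
have Qpos i : all (fun z => 0 < z) (nth [::] Q i).
  by apply: sub_all (Qge i) => z; apply: leq_trans b_pos.
split; [apply/and3P; split | split; [split | ]].
- by apply/(all_nthP [::]) => i _.
- by apply/(all_nthP [::]) => i _.
- apply/eqP/(@eq_from_nth _ 0); rewrite !size_map ?sizeQ // => i iP.
  by rewrite !(nth_map [::]) ?sizeQ ?sizeQi.
- by apply/(all_nthP [::]) => i _; rewrite (sorted_pairwise ltn_trans).
- by apply/(all_nthP [::]) => i _; rewrite (sorted_pairwise ltn_trans).
- move=> i _; apply: mset_le_count; first by rewrite !size_cat !sizeQi addnC.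
  by move=> t; rewrite !count_lt_cat; apply: semistd.
- move=> i iP; apply: mset_lessdot_count; first by rewrite sizeQi.
    by rewrite -size_eq0 -lt0n Pne.
  exact: neg.
Qed.

Lemma brsk_inv_foldl s PQ a b :
  brsk_inv PQ.1 PQ.2 a b -> path brsk_order (a, b) s ->
  all (fun p => 0 < p.1 < p.2) s ->
  exists a' b', brsk_inv (foldl brsk_step PQ s).1 (foldl brsk_step PQ s).2 a' b'.
Proof.
elim: s PQ a b => [|[a' b'] s IH] PQ a b inv /=; first by exists a, b.
case/andP=> ordered sorted_s /andP [/andP [a'_pos a'_lt_b'] pairs_s].
apply: IH sorted_s pairs_s; case: PQ inv => P Q inv.
exact: brsk_inv_step inv ordered a'_pos a'_lt_b'.
Qed.

Lemma brsk_order_total : total brsk_order.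
Proof.
by move=> p q; rewrite /brsk_order; case: (ltngtP p.2 q.2) => //= _; apply: leq_total.
Qed.

Lemma brsk_inv_BRSK U : all (fun p => 0 < p.1 < p.2) U ->
  exists a b, brsk_inv (BRSK U).1 (BRSK U).2 a b.
Proof.
rewrite -(all_sort _ brsk_order) /BRSK.
move: (sort_sorted brsk_order_total U).
case: (sort brsk_order U) => [|[a b] s] sorted_s pairs_s.
  by exists 0, 1; apply: brsk_inv_nil.
have /andP [/andP [a_pos a_lt_b] _] := pairs_s.
apply: (brsk_inv_foldl (PQ := ([::], [::])) (a := a) (b := b)) pairs_s.
  exact: brsk_inv_nil (ltn_trans a_pos a_lt_b).
by rewrite /= {1}/brsk_order /= ltnn eqxx leqnn.
Qed.

Theorem lemma6p2 (U : seq (nat * nat)) :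
  mset_on_N2 U -> negative_mset U ->
  notched_bitableau (BRSK U).1 (BRSK U).2 /\
  semistandard (BRSK U).1 (BRSK U).2 /\
  negative_bitableau (BRSK U).1 (BRSK U).2.
Proof.
move=> U_pos U_neg.
have [|a [b inv]] := @brsk_inv_BRSK U; last exact: brsk_inv_bitableau inv.
apply/allP => p pU; rewrite (allP U_neg p pU) andbT.
by case/andP: (allP U_pos p pU).
Qed.
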